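(* Under the hypotheses of the preceding setting (random perfect matching $\mathbf M$ of two $n$-sets $V,W$; partitions $A_0,\dots,A_s$ of $V$ and $B_0,\dots,B_t$ of $W$ into nonempty parts with $s,t$ fixed, $a_i=|A_i|$, $b_j=|B_j|$; nonnegative integers $e_{ij}$ with $\sum_je_{ij}=a_i$, $\sum_ie_{ij}=b_j$; $\mu_{ij}=a_ib_j/n$, $e_{ij}=\mu_{ij}(1+\epsilon_{ij})$, $E_{ij}$ the number of edges of $\mathbf M$ between $A_i$ and $B_j$), there is a constant $C=C(s,t)$ such that \[\mathbb{P}\Big(\bigcap_{i,j}\{E_{ij}=e_{ij}\}\Big)\le C\Big(\prod_{1\le i\le s}a_i\prod_{1\le j\le t}b_j\Big)^{1/4}\exp\Big(-\sum_{i,j}\mu_{ij}\big[(1+\epsilon_{ij})\log(1+\epsilon_{ij})-\epsilon_{ij}\big]\Big),\] with the convention that the bracket equals $1$ when $\epsilon_{ij}=-1$.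
   Context: Logarithms are natural; $C$ does not depend on $n$ or on the sets. *)

From mathcomp Require Import all_boot perm.
From Stdlib Require Import Reals.

Set Implicit Arguments.
Unset Strict Implicit.
Unset Printing Implicit Defensive.

(* V = W = 'I_n.  A perfect matching between V and W is a bijection
   sg : {perm 'I_n} (v is matched to sg v); the random matching M is uniform.
   The partition A_0..A_s of V is given by the labelling A : 'I_n -> 'I_s.+1
   (A_i = [set v | A v == i]); similarly B for W. *)

Definition partsize (n k : nat) (A : 'I_n -> 'I_k) (i : 'I_k) : nat :=
  #|[set v | A v == i]|.

Definition Ecount (n s t : nat) (A : 'I_n -> 'I_s.+1) (B : 'I_n -> 'I_t.+1)
  (sg : {perm 'I_n}) (i : 'I_s.+1) (j : 'I_t.+1) : nat :=
  #|[set v | (A v == i) && (B (sg v) == j)]|.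

Definition prob_event (n s t : nat) (A : 'I_n -> 'I_s.+1) (B : 'I_n -> 'I_t.+1)
  (e : 'I_s.+1 -> 'I_t.+1 -> nat) : R :=
  (INR #|[set sg : {perm 'I_n} |
           [forall i, forall j, Ecount A B sg i j == e i j]]|
   / INR (n`!))%R.

Definition mu (n s t : nat) (A : 'I_n -> 'I_s.+1) (B : 'I_n -> 'I_t.+1)
  (i : 'I_s.+1) (j : 'I_t.+1) : R :=
  (INR (partsize A i) * INR (partsize B j) / INR n)%R.

Definition eps (n s t : nat) (A : 'I_n -> 'I_s.+1) (B : 'I_n -> 'I_t.+1)
  (e : 'I_s.+1 -> 'I_t.+1 -> nat) (i : 'I_s.+1) (j : 'I_t.+1) : R :=
  (INR (e i j) / mu A B i j - 1)%R.

Definition bracket (x : R) : R :=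
  if Req_EM_T x (-1)%R then 1%R else ((1 + x) * ln (1 + x) - x)%R.

Definition exponent_sum (n s t : nat) (A : 'I_n -> 'I_s.+1) (B : 'I_n -> 'I_t.+1)
  (e : 'I_s.+1 -> 'I_t.+1 -> nat) : R :=
  \big[Rplus/0%R]_(i < s.+1) \big[Rplus/0%R]_(j < t.+1)
     (mu A B i j * bracket (eps A B e i j))%R.

Definition size_prod (n s t : nat) (A : 'I_n -> 'I_s.+1) (B : 'I_n -> 'I_t.+1) : nat :=
  ((\prod_(i < s.+1 | i != ord0) partsize A i) *
   (\prod_(j < t.+1 | j != ord0) partsize B j))%N.

(* A matching [sg] with [E_ij = e_ij] is determined by the function
   [v |-> class of sg v], which has row profile [e] (at most
   [prod_i a_i^a_i / prod_ij e_ij^e_ij] such functions, by the multinomial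
   theorem), together with a permutation of [W] preserving the classes [B_j]
   (at most [prod_j b_j!] of them); the same holds with [V] and [W] exchanged.
   Averaging the logarithms of the two bounds and inserting Stirling's formula
   [ln k! = k ln k - k + (ln k)/2 + O(1)], the entropy terms combine into
   [-sum_ij mu_ij ((1+eps_ij) ln (1+eps_ij) - eps_ij)] and what remains is
   [(sum_i ln a_i + sum_j ln b_j)/4 - (ln n)/2 + O(s + t)], where the terms
   [i = 0] and [j = 0] are absorbed by [(ln n)/2] since [a_0, b_0 <= n]. *)

From mathcomp Require Import all_boot perm.
From Stdlib Require Import Reals.
From HB Require Import structures.
From mathcomp Require Import fingroup action.
From Stdlib Require Import Lra.
From Coquelicot Require Import Coquelicot.

Set Implicit Arguments.
Unset Strict Implicit.
Unset Printing Implicit Defensive.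

Open Scope nat_scope.

Lemma sum_partsize n k (c : 'I_n -> 'I_k) : \sum_i partsize c i = n.
Proof.
rewrite -[RHS]card_ord -sum1_card (partition_big c xpredT) //=.
by apply: eq_bigr => i _; rewrite sum1_card; apply: eq_card => v; rewrite inE.
Qed.

Lemma partsize_le n k (c : 'I_n -> 'I_k) i : partsize c i <= n.
Proof. by rewrite -[X in _ <= X]card_ord max_card. Qed.

Lemma prod_comp_partsize n m (c : 'I_n -> 'I_m) (G : 'I_m -> nat) :
  \prod_v G (c v) = \prod_i expn (G i) (partsize c i).
Proof.
rewrite (partition_big c xpredT) //=; apply: eq_bigr => i _.
rewrite (eq_bigr (fun _ => G i)); last by move=> v /eqP ->.
by rewrite prod_nat_const; congr expn; apply: eq_card => v; rewrite inE.
Qed.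

Section Counting.
Variables (n k l : nat) (A : 'I_n -> 'I_k) (B : 'I_n -> 'I_l) (e : 'I_k -> 'I_l -> nat).

Definition joint_count (f : 'I_n -> 'I_l) i j := #|[set v | (A v == i) && (f v == j)]|.

Definition profile_ffuns :=
  [set f : {ffun 'I_n -> 'I_l} | [forall i, forall j, joint_count f i j == e i j]].

Definition class_perms := [set p : {perm 'I_n} | [forall w, B (p w) == B w]].

Definition matchings :=
  [set sg : {perm 'I_n} | [forall i, forall j, joint_count (B \o sg) i j == e i j]].

Lemma prod_profile_ffun f : f \in profile_ffuns ->
  \prod_v e (A v) (f v) = \prod_i \prod_j expn (e i j) (e i j).
Proof.
rewrite inE => /forallP fe.
rewrite (partition_big (fun v => (A v, f v)) xpredT) //= pair_big.
apply: eq_bigr => -[i j] _ /=.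
rewrite (eq_bigr (fun _ => e i j)); last by move=> v /eqP [<- <-].
rewrite prod_nat_const; have /forallP /(_ j) /eqP <- := fe i.
by congr expn; apply: eq_card => v; rewrite !inE.
Qed.

(* The multinomial bound: expand [prod_i a_i ^ a_i = prod_v (sum_j e (A v) j)]
   and keep only the terms indexed by functions of profile [e]. *)
Lemma card_profile_ffuns_le : (forall i, \sum_j e i j = partsize A i) ->
  #|profile_ffuns| * \prod_i \prod_j expn (e i j) (e i j)
    <= \prod_i expn (partsize A i) (partsize A i).
Proof.
move=> row_sum; rewrite -prod_comp_partsize.
have -> : \prod_v partsize A (A v) = \prod_v \sum_j e (A v) j.
  by apply: eq_bigr => v _; rewrite row_sum.
rewrite bigA_distr_bigA /= (bigID (mem profile_ffuns)) /=.
rewrite -sum_nat_const; apply: leq_trans (leq_addr _ _).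
by rewrite leq_eqVlt (eq_bigr _ prod_profile_ffun) eqxx.
Qed.

Lemma card_class_perms_le : #|class_perms| <= \prod_j (partsize B j)`!.
Proof.
pose S j := [set w | B w == j].
have restrE p j w : p \in class_perms -> B w == j -> restr_perm (S j) p w = p w.
  rewrite inE => /forallP pB Bw; apply: restr_permE; last by rewrite inE.
  rewrite !inE; apply/subsetP => x; rewrite !inE => /eqP <-.
  by rewrite /aperm (eqP (pB x)).
pose phi p : {dffun forall j, {perm 'I_n}} := [ffun j => restr_perm (S j) p].
have -> : \prod_j (partsize B j)`! = #|setXn (fun j => [set q | perm_on (S j) q])|.
  by rewrite cardsXn; apply: eq_bigr => j _; rewrite -card_perm cardsE.
rewrite -(card_in_imset (f := phi)).
  apply/subset_leq_card/subsetP => _ /imsetP [p _ ->].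
  by apply/setXnP => j; rewrite inE ffunE restr_perm_on.
move=> p q pK qK phipq; apply/permP => w.
have := congr1 (fun F : {dffun forall j, {perm 'I_n}} => F (B w) w) phipq.
by rewrite /= !ffunE !restrE.
Qed.

Definition matching_profile (sg : {perm 'I_n}) : {ffun 'I_n -> 'I_l} :=
  [ffun v => B (sg v)].

Lemma matching_profile_in sg :
  sg \in matchings -> matching_profile sg \in profile_ffuns.
Proof.
rewrite !inE => /forallP sge; apply/forallP => i; apply/forallP => j.
have /forallP /(_ j) /eqP <- := sge i.
by apply/eqP/eq_card => v; rewrite !inE ffunE.
Qed.

(* [sg] is recovered from its profile [f] and from [r^-1 * sg], where [r] is a
   fixed matching of profile [f]; the latter preserves the classes of [B]. *)
Lemma card_matchings_le_mul : #|matchings| <= #|profile_ffuns| * #|class_perms|.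
Proof.
pose rep f := odflt 1%g [pick r in matchings | matching_profile r == f].
have repP sg : sg \in matchings ->
    matching_profile (rep (matching_profile sg)) = matching_profile sg.
  move=> sgM; rewrite /rep; case: pickP => [r /andP [_ /eqP] //|].
  by move/(_ sg); rewrite sgM eqxx.
pose psi sg := (matching_profile sg, ((rep (matching_profile sg))^-1 * sg)%g).
rewrite -cardsX -(card_in_imset (f := psi)); last first.
  by move=> sg1 sg2 _ _ [-> /mulgI].
apply/subset_leq_card/subsetP => _ /imsetP [sg sgM ->].
apply/setXP; split; first exact: matching_profile_in.
rewrite inE; apply/forallP => w; rewrite permM.
set r := rep (matching_profile sg).
have := congr1 (fun f : {ffun 'I_n -> 'I_l} => f (r^-1%g w)) (repP sg sgM).
by rewrite /= !ffunE permKV => ->.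
Qed.

Lemma card_matchings_le : (forall i, \sum_j e i j = partsize A i) ->
  #|matchings| * \prod_i \prod_j expn (e i j) (e i j)
    <= (\prod_i expn (partsize A i) (partsize A i)) * \prod_j (partsize B j)`!.
Proof.
move=> row_sum.
apply: leq_trans (leq_mul (card_profile_ffuns_le row_sum) card_class_perms_le).
by rewrite mulnAC leq_mul2r card_matchings_le_mul orbT.
Qed.

End Counting.

Lemma card_matchings_le_transpose (n k l : nat) (A : 'I_n -> 'I_k) (B : 'I_n -> 'I_l) e :
  #|matchings A B e| <= #|matchings B A (fun j i => e i j)|.
Proof.
rewrite -(card_imset _ (@invg_inj _)); apply/subset_leq_card/subsetP.
move=> _ /imsetP [sg + ->]; rewrite !inE => /forallP sge.
apply/forallP => j; apply/forallP => i; have /forallP /(_ j) /eqP <- := sge i.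
rewrite /joint_count -(card_preimset _ (@perm_inj _ sg)).
by apply/eqP/eq_card => v; rewrite !inE /= permK andbC.
Qed.

Open Scope R_scope.

Definition xlnx (k : nat) : R := INR k * ln (INR k).

Lemma INR_pos k : (0 < k)%nat -> 0 < INR k.
Proof. by move=> k0; apply/lt_0_INR/ltP. Qed.

HB.instance Definition _ := Monoid.isComLaw.Build R 0 Rplus
  (fun x y z => esym (Rplus_assoc x y z)) Rplus_comm Rplus_0_l.

Lemma INR_sum (I : Type) (r : seq I) (P : pred I) (F : I -> nat) :
  INR (\sum_(i <- r | P i) F i)%nat = \big[Rplus/0]_(i <- r | P i) INR (F i).
Proof. exact: (big_morph INR plus_INR). Qed.

Lemma sumR_mull (I : Type) (r : seq I) (P : pred I) (F : I -> R) c :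
  \big[Rplus/0]_(i <- r | P i) (c * F i) = c * \big[Rplus/0]_(i <- r | P i) F i.
Proof. by apply: (big_rec2 (fun x y => x = c * y)) => [|i x y _ ->]; ring. Qed.

Lemma sumR_opp (I : Type) (r : seq I) (P : pred I) (F : I -> R) :
  \big[Rplus/0]_(i <- r | P i) - F i = - \big[Rplus/0]_(i <- r | P i) F i.
Proof. by apply: (big_rec2 (fun x y => x = - y)) => [|i x y _ ->]; ring. Qed.

Lemma sumR_const k c : \big[Rplus/0]_(i < k) c = INR k * c.
Proof.
by elim: k => [|k IH]; rewrite ?big_ord0 ?big_ord_recr ?IH ?S_INR /=; ring.
Qed.

Lemma sumR_mulr (I : Type) (r : seq I) (P : pred I) (F : I -> R) c :
  \big[Rplus/0]_(i <- r | P i) (F i * c) = (\big[Rplus/0]_(i <- r | P i) F i) * c.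
Proof. by apply: (big_rec2 (fun x y => x = y * c)) => [|i x y _ ->]; ring. Qed.

Lemma sumR_le (I : Type) (r : seq I) (P : pred I) (F G : I -> R) :
  (forall i, P i -> F i <= G i) ->
  \big[Rplus/0]_(i <- r | P i) F i <= \big[Rplus/0]_(i <- r | P i) G i.
Proof. by move=> FG; apply: (big_ind2 Rle) => // *; lra. Qed.

Lemma ln_INR_prod (I : Type) (r : seq I) (P : pred I) (F : I -> nat) :
  (forall i, P i -> (0 < F i)%nat) ->
  ln (INR (\prod_(i <- r | P i) F i)%nat) = \big[Rplus/0]_(i <- r | P i) ln (INR (F i)).
Proof.
move=> F0; elim: r => [|i r IH]; first by rewrite !big_nil ln_1.
rewrite !big_cons; case: ifP => // Pi.
by rewrite mult_INR ln_mult ?IH //; apply: INR_pos; [exact: F0|exact: prodn_cond_gt0].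
Qed.

Lemma INR_expn m k : INR (expn m k) = INR m ^ k.
Proof. by elim: k => [|k IH] //; rewrite expnS mult_INR IH. Qed.

Lemma ln_INR_expn_self k : ln (INR (expn k k)) = xlnx k.
Proof.
rewrite /xlnx; case: k => [|k]; first by rewrite /= ln_1; ring.
by rewrite INR_expn ln_pow //; apply: INR_pos.
Qed.

Lemma ln_INR_le (x y : nat) : (0 < x)%nat -> (x <= y)%nat -> ln (INR x) <= ln (INR y).
Proof. by move=> /INR_pos x0 /leP/le_INR; apply: ln_le. Qed.

Lemma derive_ge0_le (f df : R -> R) {a b : R} : a <= b ->
  (forall x, a <= x <= b -> is_derive f x (df x)) ->
  (forall x, a < x < b -> 0 <= df x) -> f a <= f b.
Proof.
move=> /Rle_lt_or_eq_dec [ab|<-] fD dfP; last lra.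
have fD' x hx := proj1 (is_derive_Reals f x (df x)) (fD x hx).
have [c [E acb]] := MVT_cor2 f df a b ab fD'.
have := dfP c acb; nra.
Qed.

Lemma ln_le_sub_1 y : 0 < y -> ln y <= y - 1.
Proof. by move=> y0; have := exp_ineq1_le (ln y); rewrite exp_ln //; lra. Qed.

Lemma ln_ge_1_sub_inv y : 0 < y -> 1 - / y <= ln y.
Proof.
move=> y0; have := ln_le_sub_1 (Rinv_0_lt_compat y y0).
rewrite ln_Rinv //; lra.
Qed.

Lemma sub_1_le_mul_ln y : 1 <= y -> 2 * (y - 1) <= (y + 1) * ln y.
Proof.
move=> y1; pose f x := (x + 1) * ln x - 2 * (x - 1).
suff : f 1 <= f y by rewrite /f ln_1; lra.
apply: (derive_ge0_le (f := f) (df := fun x => ln x - 1 + / x) y1) => x hx.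
- rewrite /f; auto_derive; first lra. field; lra.
- have /ln_ge_1_sub_inv : 0 < x by lra.
  lra.
Qed.

Lemma mul_ln_le_sq y : 1 <= y -> 2 * y * ln y <= y * y - 1.
Proof.
move=> y1; pose f x := x * x - 1 - 2 * x * ln x.
suff : f 1 <= f y by rewrite /f ln_1; lra.
apply: (derive_ge0_le (f := f) (df := fun x => 2 * (x - 1 - ln x)) y1) => x hx.
- rewrite /f; auto_derive; first lra. field; lra.
- have /ln_le_sub_1 : 0 < x by lra.
  lra.
Qed.

Lemma mul_ln_le_quad y : 1 <= y -> (4 * y + 2) * ln y <= (y - 1) * (y + 5).
Proof.
move=> y1; pose f x := (x - 1) * (x + 5) - (4 * x + 2) * ln x.
suff : f 1 <= f y by rewrite /f ln_1; lra.
apply: (derive_ge0_le (f := f) (df := fun x => 2 / x * (x * x - 1 - 2 * x * ln x)) y1) => x hx.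
- rewrite /f; auto_derive; first lra. field; lra.
- have /mul_ln_le_sq : 1 <= x by lra.
  have : 0 < 2 / x by apply: Rdiv_lt_0_compat; lra.
  nra.
Qed.

Lemma mul_ln_1_add_inv_ge x : 1 <= x -> 1 <= (x + / 2) * ln (1 + / x).
Proof.
move=> x1; have x0 : 0 < x by lra.
have xv : x * / x = 1 by apply: Rinv_r; lra.
have /sub_1_le_mul_ln lo : 1 <= 1 + / x by have := Rinv_0_lt_compat x x0; lra.
have := Rmult_le_compat_l x _ _ (Rlt_le _ _ x0) lo.
have -> : x * (2 * (1 + / x - 1)) = 2 * (x * / x) by ring.
have -> : x * ((1 + / x + 1) * ln (1 + / x)) = (2 * x + x * / x) * ln (1 + / x) by ring.
by rewrite xv; lra.
Qed.

Lemma mul_ln_1_add_inv_le x : 1 <= x ->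
  (x + / 2) * ln (1 + / x) <= 1 + / (8 * x * (x + 1)).
Proof.
move=> x1; have x0 : 0 < x by lra.
have xv : x * / x = 1 by apply: Rinv_r; lra.
have y1 : 1 <= 1 + / x by have := Rinv_0_lt_compat x x0; lra.
have L0 : 0 <= ln (1 + / x) by rewrite -ln_1; apply: ln_le; lra.
set v := / x in xv y1 L0 *; set L := ln (1 + v) in L0 *.
have hi : (6 * x * x + 4 * x) * L <= 6 * x + 1.
  have := Rmult_le_compat_l (x * x) _ _ (Rlt_le _ _ (Rmult_lt_0_compat _ _ x0 x0))
    (mul_ln_le_quad y1).
  have -> : x * x * ((1 + v - 1) * (1 + v + 5)) = (x * v) * (x * v) + 6 * x * (x * v).
    by ring.
  have -> : x * x * ((4 * (1 + v) + 2) * L) = (6 * x * x + 4 * x * (x * v)) * L by ring.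
  by rewrite xv; lra.
have d0 : 0 < 8 * x * (x + 1) by nra.
apply: (Rmult_le_reg_l _ _ _ d0).
rewrite [X in _ <= X]Rmult_plus_distr_l Rinv_r; last lra.
have c0 : 0 <= 4 * (x + 1) * (2 * x + 1) by nra.
have := Rmult_le_compat_l _ _ _ c0 hi.
have -> : 4 * (x + 1) * (2 * x + 1) * ((6 * x * x + 4 * x) * L)
  = (6 * x + 4) * (8 * x * (x + 1) * ((x + / 2) * L)) by field.
by move=> H; apply: (Rmult_le_reg_l (6 * x + 4)); nra.
Qed.

Definition stirling_rem (k : nat) : R :=
  ln (INR k`!) - (xlnx k - INR k + / 2 * ln (INR k)).

Lemma stirling_rem_succ k : (0 < k)%nat ->
  stirling_rem k.+1 = stirling_rem k + 1 - (INR k + / 2) * ln (1 + / INR k).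
Proof.
move=> /INR_pos k0; have f0 : 0 < INR k`! by apply/INR_pos/fact_gt0.
have -> : ln (1 + / INR k) = ln (INR k + 1) - ln (INR k).
  by rewrite -ln_div; try lra; congr ln; field; lra.
by rewrite /stirling_rem /xlnx factS mult_INR S_INR ln_mult //; lra.
Qed.

(* The lower step bound makes [stirling_rem] decrease, the upper one makes
   [stirling_rem k - 1/(8k)] increase. *)
Lemma stirling_rem_bounds k : (0 < k)%nat ->
  7 / 8 + / (8 * INR k) <= stirling_rem k <= 1.
Proof.
elim: k => [//|[_ _|k IH _]].
  by rewrite /stirling_rem /xlnx /= ln_1; lra.
have k1 : 1 <= INR k.+1 by rewrite S_INR; have := pos_INR k; lra.
rewrite stirling_rem_succ //.
have := mul_ln_1_add_inv_ge k1; have := mul_ln_1_add_inv_le k1; have := IH isT.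
have -> : INR k.+2 = INR k.+1 + 1 by rewrite S_INR.
have -> : / (8 * INR k.+1) = / (8 * (INR k.+1 + 1)) + / (8 * INR k.+1 * (INR k.+1 + 1)).
  by field; lra.
lra.
Qed.

Lemma ln_fact_le k : (0 < k)%nat ->
  ln (INR k`!) <= xlnx k - INR k + / 2 * ln (INR k) + 1.
Proof. by move=> /stirling_rem_bounds; rewrite /stirling_rem; lra. Qed.

Lemma ln_fact_ge k : (0 < k)%nat ->
  xlnx k - INR k + / 2 * ln (INR k) <= ln (INR k`!).
Proof.
move=> k0; have := stirling_rem_bounds k0.
have : 0 < / (8 * INR k) by apply: Rinv_0_lt_compat; have := INR_pos k0; lra.
by rewrite /stirling_rem; lra.
Qed.

Lemma sum_ln_fact_le k (x : 'I_k -> nat) : (forall i, 0 < x i)%nat ->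
  \big[Rplus/0]_i ln (INR (x i)`!) <=
  \big[Rplus/0]_i xlnx (x i) - INR (\sum_i x i)
  + / 2 * \big[Rplus/0]_i ln (INR (x i)) + INR k.
Proof.
move=> x0; eapply Rle_trans; first by apply: sumR_le => i _; exact: ln_fact_le.
rewrite !big_split /= sumR_opp sumR_mull sumR_const INR_sum; lra.
Qed.

Lemma mul_bracket_eq (m x : R) : 0 < m -> 0 <= x ->
  m * bracket (x / m - 1) = x * ln x - x * ln m - x + m.
Proof.
move=> m0 x0; rewrite /bracket; case: Req_EM_T => [x_m|x_m] /=.
  have -> : x = 0 by apply: (Rmult_eq_reg_r (/ m)); [lra|apply: Rinv_neq_0_compat; lra].
  ring.
have {x_m x0} x_pos : 0 < x.
  by case: x0 => // x0; case: x_m; rewrite -x0 /Rdiv Rmult_0_l; ring.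
have -> : 1 + (x / m - 1) = x / m by ring.
by rewrite ln_div //; field; lra.
Qed.

Lemma expn_self_gt0 k : (0 < expn k k)%nat.
Proof. by case: k => // k; rewrite expn_gt0. Qed.

Lemma ln_INR_mul_le (x y u v : nat) : (0 < x)%nat -> (0 < y)%nat ->
  (x * y <= u * v)%nat -> ln (INR x) + ln (INR y) <= ln (INR u) + ln (INR v).
Proof.
move=> x0 y0 le_xy_uv; have xy0 : (0 < x * y)%nat by rewrite muln_gt0 x0.
have /andP [u0 v0] : (0 < u)%nat && (0 < v)%nat by rewrite -muln_gt0 (leq_trans xy0).
rewrite -!ln_mult -?mult_INR; try exact: INR_pos.
exact: ln_INR_le.
Qed.

Lemma ln_INR_prod_expn_self k l (F : 'I_k -> 'I_l -> nat) :
  ln (INR (\prod_i \prod_j expn (F i j) (F i j))%nat)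
  = \big[Rplus/0]_i \big[Rplus/0]_j xlnx (F i j).
Proof.
rewrite ln_INR_prod => [|i _]; last by apply: prodn_gt0 => j; exact: expn_self_gt0.
apply: eq_bigr => i _; rewrite ln_INR_prod => [|j _]; last exact: expn_self_gt0.
by apply: eq_bigr => j _; exact: ln_INR_expn_self.
Qed.

Lemma ln_card_matchings_le n k l (A : 'I_n -> 'I_k) (B : 'I_n -> 'I_l) e :
  (forall i, (\sum_j e i j)%nat = partsize A i) -> (0 < #|matchings A B e|)%nat ->
  ln (INR #|matchings A B e|) + \big[Rplus/0]_i \big[Rplus/0]_j xlnx (e i j)
  <= \big[Rplus/0]_i xlnx (partsize A i) + \big[Rplus/0]_j ln (INR (partsize B j)`!).
Proof.
move=> row_sum X0.
have P0 : (0 < \prod_i \prod_j expn (e i j) (e i j))%nat.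
  by apply: prodn_gt0 => i; apply: prodn_gt0 => j; exact: expn_self_gt0.
have := ln_INR_mul_le X0 P0 (card_matchings_le B row_sum).
rewrite ln_INR_prod_expn_self (ln_INR_prod _ (fun j _ => fact_gt0 _)).
rewrite (ln_INR_prod _ (fun i _ => expn_self_gt0 _)).
by rewrite (eq_bigr _ (fun i _ => ln_INR_expn_self _)).
Qed.

Section Main.
Variables (n s t : nat) (A : 'I_n -> 'I_s.+1) (B : 'I_n -> 'I_t.+1)
  (e : 'I_s.+1 -> 'I_t.+1 -> nat).
Hypothesis A_pos : forall i, (0 < partsize A i)%nat.
Hypothesis B_pos : forall j, (0 < partsize B j)%nat.
Hypothesis row_sum : forall i, (\sum_j e i j)%nat = partsize A i.
Hypothesis col_sum : forall j, (\sum_i e i j)%nat = partsize B j.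

Let sum_xlnx_e := \big[Rplus/0]_i \big[Rplus/0]_j xlnx (e i j).
Let sum_xlnx_A := \big[Rplus/0]_i xlnx (partsize A i).
Let sum_xlnx_B := \big[Rplus/0]_j xlnx (partsize B j).

Lemma n_gt0 : (0 < n)%nat.
Proof. exact: leq_trans (A_pos ord0) (partsize_le A ord0). Qed.

Lemma ln_mu i j :
  ln (mu A B i j) = ln (INR (partsize A i)) + ln (INR (partsize B j)) - ln (INR n).
Proof.
have a0 := INR_pos (A_pos i); have b0 := INR_pos (B_pos j).
have ab0 := Rmult_lt_0_compat _ _ a0 b0.
by rewrite /mu ln_div ?ln_mult //; apply: INR_pos n_gt0.
Qed.

Lemma sum_e_mul_rows (g : 'I_s.+1 -> R) :
  \big[Rplus/0]_i \big[Rplus/0]_j (INR (e i j) * g i)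
  = \big[Rplus/0]_i (INR (partsize A i) * g i).
Proof. by apply: eq_bigr => i _; rewrite sumR_mulr -INR_sum row_sum. Qed.

Lemma sum_e_mul_cols (h : 'I_t.+1 -> R) :
  \big[Rplus/0]_i \big[Rplus/0]_j (INR (e i j) * h j)
  = \big[Rplus/0]_j (INR (partsize B j) * h j).
Proof.
by rewrite exchange_big; apply: eq_bigr => j _; rewrite sumR_mulr -INR_sum col_sum.
Qed.

Lemma sum_mu : \big[Rplus/0]_i \big[Rplus/0]_j mu A B i j = INR n.
Proof.
have n0 := INR_pos n_gt0.
have row i : \big[Rplus/0]_j mu A B i j = INR (partsize A i).
  rewrite (eq_bigr (fun j => INR (partsize B j) * (INR (partsize A i) / INR n))).
    by rewrite sumR_mulr -INR_sum sum_partsize; field; lra.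
  by move=> j _; rewrite /mu; field; lra.
by rewrite (eq_bigr _ (fun i _ => row i)) -INR_sum sum_partsize.
Qed.

Lemma exponent_sum_eq :
  exponent_sum A B e = sum_xlnx_e - sum_xlnx_A - sum_xlnx_B + xlnx n.
Proof.
have n0 := INR_pos n_gt0.
have termE i j : mu A B i j * bracket (eps A B e i j) =
    xlnx (e i j) + INR (e i j) * (ln (INR n) - 1 - ln (INR (partsize A i)))
    + (INR (e i j) * - ln (INR (partsize B j)) + mu A B i j).
  have mu0 : 0 < mu A B i j.
    by apply: Rdiv_lt_0_compat => //; apply: Rmult_lt_0_compat; apply: INR_pos.
  by rewrite /eps mul_bracket_eq ?ln_mu //; [rewrite /xlnx; ring|exact: pos_INR].
have rowsE : \big[Rplus/0]_i (INR (partsize A i) * (ln (INR n) - 1 - ln (INR (partsize A i))))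
    = INR n * (ln (INR n) - 1) - sum_xlnx_A.
  rewrite (eq_bigr (fun i => INR (partsize A i) * (ln (INR n) - 1) + - xlnx (partsize A i))).
    by rewrite big_split sumR_opp sumR_mulr -INR_sum sum_partsize.
  by move=> i _; rewrite /xlnx; ring.
have colsE : \big[Rplus/0]_j (INR (partsize B j) * - ln (INR (partsize B j))) = - sum_xlnx_B.
  by rewrite -sumR_opp; apply: eq_bigr => j _; rewrite /xlnx; ring.
rewrite /exponent_sum; under eq_bigr => i _ do under eq_bigr => j _ do rewrite termE.
under eq_bigr => i _ do rewrite !big_split.
rewrite !big_split /= sum_e_mul_rows sum_e_mul_cols sum_mu rowsE colsE -/sum_xlnx_e.
by rewrite [xlnx n]/xlnx; ring.
Qed.

Lemma ln_card_matchings_le_cols : (0 < #|matchings A B e|)%nat ->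
  ln (INR #|matchings A B e|) + sum_xlnx_e
  <= sum_xlnx_B + \big[Rplus/0]_i ln (INR (partsize A i)`!).
Proof.
move=> X0; have XT := card_matchings_le_transpose A B e.
have := ln_card_matchings_le col_sum (leq_trans X0 XT).
have := ln_INR_le X0 XT.
by rewrite /sum_xlnx_e /sum_xlnx_B exchange_big /=; lra.
Qed.

Lemma ln_size_prod :
  ln (INR (size_prod A B)) + ln (INR (partsize A ord0)) + ln (INR (partsize B ord0))
  = \big[Rplus/0]_i ln (INR (partsize A i)) + \big[Rplus/0]_j ln (INR (partsize B j)).
Proof.
have PA : (0 < \prod_(i < s.+1 | i != ord0) partsize A i)%nat by exact: prodn_gt0.
have PB : (0 < \prod_(j < t.+1 | j != ord0) partsize B j)%nat by exact: prodn_gt0.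
rewrite /size_prod mult_INR ln_mult; try exact: INR_pos.
rewrite (ln_INR_prod _ (fun i _ => A_pos i)) (ln_INR_prod _ (fun j _ => B_pos j)).
rewrite [X in _ = X + _](bigD1 ord0) // [X in _ = _ + X](bigD1 ord0) //=.
(* The sums on both sides differ by convertible eqType instances, which [lra]
   would treat as distinct atoms. *)
have shuffle (x y u v : R) : x + y + u + v = u + x + (v + y) by ring.
exact: shuffle.
Qed.

Lemma ln_matchings_ratio_le : (0 < #|matchings A B e|)%nat ->
  ln (INR #|matchings A B e|) - ln (INR n`!) + exponent_sum A B e
  <= (INR s + INR t + 2) / 2 + / 4 * ln (INR (size_prod A B)).
Proof.
move=> X0; have rows := ln_card_matchings_le row_sum X0.
have cols := ln_card_matchings_le_cols X0.
have factA := sum_ln_fact_le A_pos; have factB := sum_ln_fact_le B_pos.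
rewrite !sum_partsize !S_INR in factA factB.
have factn := ln_fact_ge n_gt0; have := ln_size_prod.
have := ln_INR_le (A_pos ord0) (partsize_le A ord0).
have := ln_INR_le (B_pos ord0) (partsize_le B ord0).
by rewrite exponent_sum_eq /sum_xlnx_e /sum_xlnx_A /sum_xlnx_B in cols *; lra.
Qed.

End Main.

Lemma exp_le (x y : R) : x <= y -> exp x <= exp y.
Proof. by case=> [/exp_increasing/Rlt_le|->] //; apply: Rle_refl. Qed.

Close Scope R_scope.

Theorem corollary4p2 :
  forall s t : nat, exists C : R,
  forall (n : nat) (A : 'I_n -> 'I_s.+1) (B : 'I_n -> 'I_t.+1)
         (e : 'I_s.+1 -> 'I_t.+1 -> nat),
    (forall i, 0 < partsize A i)%N ->
    (forall j, 0 < partsize B j)%N ->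
    (forall i, \sum_(j < t.+1) e i j = partsize A i)%N ->
    (forall j, \sum_(i < s.+1) e i j = partsize B j)%N ->
    (prob_event A B e
       <= C * Rpower (INR (size_prod A B)) (1 / 4)
            * exp (- exponent_sum A B e))%R.
Proof.
move=> s t; exists (exp ((INR s + INR t + 2) / 2))%R.
move=> n A B e A_pos B_pos row_sum col_sum.
have -> : prob_event A B e = (INR #|matchings A B e| / INR n`!)%R by [].
rewrite /Rpower -!exp_plus; case: (posnP #|matchings A B e|) => [->|X0].
  by rewrite /Rdiv Rmult_0_l; left; exact: exp_pos.
have fact0 := INR_pos (fact_gt0 n).
rewrite -[(_ / _)%R]exp_ln; last exact: Rdiv_lt_0_compat (INR_pos X0) fact0.
rewrite ln_div //; last exact: INR_pos.
apply: exp_le; have := ln_matchings_ratio_le A_pos B_pos row_sum col_sum X0; lra.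
Qed.
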